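(* Let $0<a,b<1$, $f\ge3$, and let $q^*_n,w^*_n,\overline q_n$ be as in the context. Let $$Q(b):=\begin{bmatrix}q^*_1(b)&w^*_1(b)\\ q^*_2(b)&w^*_2(b)\end{bmatrix},\quad B:=\begin{bmatrix}\frac{b-a}{1-a}&\frac{1-b}{1-a}\\ \frac{b-a}{1-a}\beta(a,b)-x(a,b)&\frac{1-b}{1-a}\beta(a,b)\end{bmatrix},\quad M:=Q(b)^{-1}B.$$ Then for all $j\ge1$, $$\overline q_{f+j-1}=\begin{bmatrix}q^*_j(b)&w^*_j(b)\end{bmatrix}M\begin{bmatrix}q^*_{f-1}(a)\\ q^*_f(a)\end{bmatrix}.$$
   Context: Let $r,y,z$ be indeterminates. For $c\in(0,1)$: $\omega_c:=1-(1-c)^2r^2y^2z^2$, $\tau_c:=1+(1-c)^2r^2z^2y(1-y)$, $x_c:=c^2z^2\tau_c^2$, $\beta_c:=1+z^2(c^2-(1-c)^2r^2(y^2+c^2(1-y)^2z^2))$; $w^*_0(c):=(\beta_c-\omega_c)/x_c$, $w^*_1(c):=1$, $w^*_{n+1}(c):=\beta_cw^*_n(c)-x_cw^*_{n-1}(c)$ ($n\ge1$); $q^*_0(c):=-(1-y)(1+y+(1-c)^2r^2y^2z^2(1-y))/\tau_c^2$, $q^*_1(c):=y^2$, $q^*_{n+1}(c):=\beta_cq^*_n(c)-x_cq^*_{n-1}(c)$ ($n\ge1$). Also $\tau(a,b):=1+(1-a)(1-b)r^2z^2y(1-y)$, $x(a,b):=b^2z^2\tau(a,b)^2$, $\beta(a,b):=\beta_b-(b-a)b^2(1-b)r^2(1-y)^2z^4$.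 The sequence $\overline q_n$, $n\ge1$: $\overline q_n:=q^*_n(a)$ for $1\le n<f$; $\overline q_f:=\frac{1-b}{1-a}q^*_f(a)+\frac{b-a}{1-a}q^*_{f-1}(a)$; $\overline q_{f+1}:=\beta(a,b)\overline q_f-x(a,b)\overline q_{f-1}$; $\overline q_{f+j+1}:=\beta_b\overline q_{f+j}-x_b\overline q_{f+j-1}$ for $j\ge1$. *)

From HB Require Import structures.
From mathcomp Require Import all_boot all_order all_algebra.
From mathcomp Require Import fraction.
From mathcomp Require Import mpoly.
Set Implicit Arguments. Unset Strict Implicit. Unset Printing Implicit Defensive.
Import Order.TTheory GRing.Theory Num.Theory.
Local Open Scope ring_scope.

Section Rec.
Variable K : fieldType.
Fixpoint rec2p (be x u0 u1 : K) (n : nat) : K * K :=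
  match n with
  | 0 => (u0, u1)
  | n'.+1 => let p := rec2p be x u0 u1 n' in (p.2, be * p.2 - x * p.1)
  end.
Definition rec2 (be x u0 u1 : K) (n : nat) : K := (rec2p be x u0 u1 n).1.

Variables r y z : K.
Definition omega_c (c : K) := 1 - (1 - c) ^+ 2 * r ^+ 2 * y ^+ 2 * z ^+ 2.
Definition tau_c (c : K) := 1 + (1 - c) ^+ 2 * r ^+ 2 * z ^+ 2 * y * (1 - y).
Definition x_c (c : K) := c ^+ 2 * z ^+ 2 * (tau_c c) ^+ 2.
Definition beta_c (c : K) :=
  1 + z ^+ 2 * (c ^+ 2 - (1 - c) ^+ 2 * r ^+ 2 *
                 (y ^+ 2 + c ^+ 2 * (1 - y) ^+ 2 * z ^+ 2)).
Definition wstar (c : K) (n : nat) : K :=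
  rec2 (beta_c c) (x_c c) ((beta_c c - omega_c c) / x_c c) 1 n.
Definition qstar (c : K) (n : nat) : K :=
  rec2 (beta_c c) (x_c c)
    (- (1 - y) * (1 + y + (1 - c) ^+ 2 * r ^+ 2 * y ^+ 2 * z ^+ 2 * (1 - y))
       / (tau_c c) ^+ 2)
    (y ^+ 2) n.
Definition tau_ab (a b : K) := 1 + (1 - a) * (1 - b) * r ^+ 2 * z ^+ 2 * y * (1 - y).
Definition x_ab (a b : K) := b ^+ 2 * z ^+ 2 * (tau_ab a b) ^+ 2.
Definition beta_ab (a b : K) :=
  beta_c b - (b - a) * b ^+ 2 * (1 - b) * r ^+ 2 * (1 - y) ^+ 2 * z ^+ 4.

(* \overline q_n (meaningful for n >= 1). *)
Definition qbar (a b : K) (f : nat) (n : nat) : K :=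
  let qf := (1 - b) / (1 - a) * qstar a f + (b - a) / (1 - a) * qstar a f.-1 in
  let qf1 := beta_ab a b * qf - x_ab a b * qstar a f.-1 in
  if (n < f)%N then qstar a n else rec2 (beta_c b) (x_c b) qf qf1 (n - f).

Definition mx2 (p q s t : K) : 'M[K]_2 :=
  \matrix_(i < 2, j < 2)
    if i == 0 then (if j == 0 then p else q) else (if j == 0 then s else t).
Definition row2 (p q : K) : 'rV[K]_2 := \row_(j < 2) if j == 0 then p else q.
Definition col2 (p q : K) : 'cV[K]_2 := \col_(i < 2) if i == 0 then p else q.
End Rec.

Definition RF (R : realFieldType) := {fraction {mpoly R[3]}}.
Definition cst (R : realFieldType) (a : R) : RF R := tofrac (a%:MP).
Definition var_r (R : realFieldType) : RF R := tofrac ('X_(0 : 'I_3)).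
Definition var_y (R : realFieldType) : RF R := tofrac ('X_(1 : 'I_3)).
Definition var_z (R : realFieldType) : RF R := tofrac ('X_(2 : 'I_3)).

(* After the switch point f, both sides of the identity solve the recurrence
   u_{n+2} = beta_b u_{n+1} - x_b u_n: the left side by definition, the right
   side because it is a fixed linear combination of q*_j(b) and w*_j(b).  The
   matrix M is chosen so that the two sides agree at j = 1, 2, which is
   possible because det Q(b) = -(b z)^2 does not vanish. *)

From HB Require Import structures.
From mathcomp Require Import all_boot all_order all_algebra.
From mathcomp Require Import fraction.
From mathcomp Require Import mpoly.
From mathcomp Require Import ring.
Set Implicit Arguments.
Unset Strict Implicit.
Unset Printing Implicit Defensive.

Import Order.TTheory GRing.Theory Num.Theory.
Local Open Scope ring_scope.

Section TwoByTwo.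
Variable K : fieldType.
Implicit Types p q s t u v : K.

Lemma col2E (X : 'cV[K]_2) : X = col2 (X 0 0) (X 1 0).
Proof.
apply/matrixP=> i j; rewrite !mxE (ord1 j).
by case: i => [[|[|//]] ?]; congr (X _ _); apply: val_inj.
Qed.

Lemma col2_inj p q u v : col2 p q = col2 u v -> p = u /\ q = v.
Proof.
move=> e; have e0 := congr1 (fun X : 'cV[K]_2 => X 0 0) e.
have e1 := congr1 (fun X : 'cV[K]_2 => X 1 0) e.
by move: e0 e1; rewrite !mxE.
Qed.

Lemma mul_mx2_col2 p q s t u v :
  mx2 p q s t *m col2 u v = col2 (p * u + q * v) (s * u + t * v).
Proof.
apply/matrixP=> i j; rewrite !mxE !big_ord_recr big_ord0 /= !mxE add0r.
by case: i => [[|[|//]] ?].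
Qed.

Lemma mul_row2_col2 p q u v : (row2 p q *m col2 u v) 0 0 = p * u + q * v.
Proof. by rewrite !mxE !big_ord_recr big_ord0 /= !mxE add0r. Qed.

Lemma mx2_unitmx p q s t : p * t - q * s != 0 -> mx2 p q s t \in unitmx.
Proof.
move=> det_neq0; pose d := p * t - q * s.
have [] := @mulmx1_unit _ _ (mx2 p q s t) (mx2 (t / d) (- q / d) (- s / d) (p / d)) => //.
apply/matrixP=> i j; rewrite !mxE !big_ord_recr big_ord0 /= !mxE.
by case: i => [[|[|//]] ?]; case: j => [[|[|//]] ?] /=; rewrite /d; field.
Qed.

End TwoByTwo.

Section SecondOrderRecurrence.
Variables (K : fieldType) (be x : K).

Lemma rec2SS u0 u1 n :
  rec2 be x u0 u1 n.+2 = be * rec2 be x u0 u1 n.+1 - x * rec2 be x u0 u1 n.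
Proof. by []. Qed.

Lemma rec2_unique (s : nat -> K) :
  (forall n, s n.+2 = be * s n.+1 - x * s n) ->
  forall n, s n = rec2 be x (s 0%N) (s 1%N) n.
Proof.
move=> s_rec n; suff [] : s n = rec2 be x (s 0%N) (s 1%N) n /\
                         s n.+1 = rec2 be x (s 0%N) (s 1%N) n.+1 by [].
elim: n => [|n [IHn IHn1]]; first by [].
by split=> //; rewrite s_rec rec2SS IHn IHn1.
Qed.

Lemma rec2_in_basis u0 u1 w0 w1 (C : 'cV[K]_2) :
  let u := rec2 be x u0 u1 in let w := rec2 be x w0 w1 in
  let Q := mx2 (u 1%N) (w 1%N) (u 2%N) (w 2%N) in
  Q \in unitmx ->
  forall n, (row2 (u n.+1) (w n.+1) *m (invmx Q *m C)) 0 0 = rec2 be x (C 0 0) (C 1 0) n.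
Proof.
move=> u w Q Q_unit n.
set W := invmx Q *m C; rewrite [W]col2E mul_row2_col2.
have QW : Q *m W = C by rewrite mulmxA mulmxV // mul1mx.
rewrite [W]col2E [C]col2E mul_mx2_col2 in QW.
have [<- <-] := col2_inj QW.
pose t k := u k.+1 * W 0 0 + w k.+1 * W 1 0.
apply: (rec2_unique (s := t)) => k.
by rewrite /t /u /w !rec2SS; ring.
Qed.

End SecondOrderRecurrence.

Section PaperSequences.
Variables (K : fieldType) (r y z : K).

Lemma det_Qstar c : x_c r y z c != 0 ->
  qstar r y z c 1 * wstar r y z c 2 - wstar r y z c 1 * qstar r y z c 2 = - (c * z) ^+ 2.
Proof.
rewrite /qstar /wstar /rec2 /= /x_c /beta_c /omega_c.
move: (tau_c r y z c) => tau; rewrite !mulf_eq0 !orbb => /norP[/norP[c_neq0 z_neq0] tau_neq0].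
by field; rewrite c_neq0 z_neq0 tau_neq0.
Qed.

Lemma qbar_tail a b f k :
  qbar r y z a b f (f + k) =
  rec2 (beta_c r y z b) (x_c r y z b)
    ((b - a) / (1 - a) * qstar r y z a f.-1 + (1 - b) / (1 - a) * qstar r y z a f)
    (((b - a) / (1 - a) * beta_ab r y z a b - x_ab r y z a b) * qstar r y z a f.-1
       + (1 - b) / (1 - a) * beta_ab r y z a b * qstar r y z a f) k.
Proof.
rewrite /qbar ltnNge leq_addr addKn /=.
by congr rec2; ring.
Qed.

End PaperSequences.

Section RationalFunctions.
Variable R : realFieldType.

Lemma cst_neq0 (b : R) : b != 0 -> cst b != 0.
Proof. by rewrite /cst tofrac_eq0 mpolyC_eq0. Qed.

Lemma var_z_neq0 : var_z R != 0.
Proof.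
rewrite /var_z tofrac_eq0; apply/eqP=> /(congr1 (meval (fun=> 1))).
by rewrite mevalXU meval0; apply/eqP; rewrite oner_neq0.
Qed.

(* tau is the image of a polynomial that equals 1 at the origin. *)
Lemma tau_c_neq0 (b : R) : tau_c (var_r R) (var_y R) (var_z R) (cst b) != 0.
Proof.
pose X (i : 'I_3) : {mpoly R[3]} := 'X_i.
have -> : tau_c (var_r R) (var_y R) (var_z R) (cst b) =
    tofrac (1 + (1 - b%:MP) ^+ 2 * X 0 ^+ 2 * X 2 ^+ 2 * X 1 * (1 - X 1)).
  by rewrite /tau_c /cst /var_r /var_y /var_z !(rmorphXn, rmorphM, rmorphB, rmorphD, rmorph1).
rewrite tofrac_eq0; apply/eqP=> /(congr1 (meval (fun=> 0))).
rewrite !(rmorphD, rmorphB, rmorphM, rmorphXn, rmorph1) /= !mevalXU meval0.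
by rewrite !(mul0r, mulr0) addr0 => /eqP; rewrite oner_eq0.
Qed.

Lemma x_c_neq0 (b : R) : b != 0 -> x_c (var_r R) (var_y R) (var_z R) (cst b) != 0.
Proof. by move=> b_neq0; rewrite !mulf_neq0 ?expf_neq0 ?cst_neq0 ?var_z_neq0 ?tau_c_neq0. Qed.

End RationalFunctions.

Theorem lemma5 (R : realFieldType) (a b : R) (f : nat)
  (ha0 : 0 < a) (ha1 : a < 1) (hb0 : 0 < b) (hb1 : b < 1) (hf : (3 <= f)%N) :
  let r := var_r R in let y := var_y R in let z := var_z R in
  let A := cst a in let Bc := cst b in
  let Q := mx2 (qstar r y z Bc 1) (wstar r y z Bc 1)
               (qstar r y z Bc 2) (wstar r y z Bc 2) in
  let B := mx2 ((Bc - A) / (1 - A)) ((1 - Bc) / (1 - A))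
               ((Bc - A) / (1 - A) * beta_ab r y z A Bc - x_ab r y z A Bc)
               ((1 - Bc) / (1 - A) * beta_ab r y z A Bc) in
  let M := invmx Q *m B in
  forall j : nat, (1 <= j)%N ->
    qbar r y z A Bc f (f + j - 1) =
    (row2 (qstar r y z Bc j) (wstar r y z Bc j) *m M
       *m col2 (qstar r y z A f.-1) (qstar r y z A f)) 0 0.
Proof.
move=> r y z A Bc Q B M [//|k] _.
have Q_unit : Q \in unitmx.
  have b_neq0 := lt0r_neq0 hb0.
  apply: mx2_unitmx; rewrite det_Qstar ?x_c_neq0 // oppr_eq0 expf_neq0 //.
  by rewrite mulf_neq0 ?var_z_neq0 ?cst_neq0.
rewrite addnS subn1 /= qbar_tail -mulmxA /M -mulmxA mul_mx2_col2.
by rewrite (rec2_in_basis _ Q_unit) !mxE.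
Qed.
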